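(* If $i \ne j \ne k \ne i$, then $w_{i,j,k}:=|\Lambda_i,\Lambda_j,\Lambda_k| \in I_{W_d}$.
   Context: Let $P_d$ be a convex polygon with $d\ge 4$ vertices $v_1,\dots,v_d$ (indices mod $d$) over a field $\mathbb{K}$ with no three edge lines concurrent. Set ${\bf v}_i=(v_i,1)$, ${\bf n}_i={\bf v}_i\times{\bf v}_{i+1}$, $\alpha_j=|{\bf v}_{j-1}\,{\bf v}_j\,{\bf v}_{j+1}|$, $\ell_j=|{\bf v}_j\,{\bf v}_{j+1}\,{\bf p}|$, $b_i=\alpha_i\prod_{j\ne i-1,i}\ell_j$; $W_d$ is the closure of the image of $p\mapsto(b_1,\dots,b_d)$ with ideal $I_{W_d}\subseteq S=\mathbb{K}[x_1,\ldots,x_d]$. $\Lambda_r=\frac{x_{r+1}}{\alpha_{r+1}}{\bf n}_{r+1}-\frac{x_r}{\alpha_r}{\bf n}_{r-1}\in S_1^3$, and $|\Lambda_i,\Lambda_j,\Lambda_k|$ is the determinant of the $3\times 3$ matrix of linear forms with these columns. *)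

From HB Require Import structures.
From mathcomp Require Import all_boot all_order all_algebra.
From mathcomp Require Import mpoly.
Set Implicit Arguments. Unset Strict Implicit. Unset Printing Implicit Defensive.
Import Order.TTheory GRing.Theory Num.Theory.
Local Open Scope ring_scope.

(* Indices are taken in 'I_d (index t of the paper is t-1 here), mod d. *)
Definition nxt d (i : 'I_d) : 'I_d := ordS i.
Definition prv d (i : 'I_d) : 'I_d := ord_pred i.

Definition vec3 (T : Type) (a b c : T) : 'I_3 -> T :=
  fun k => if val k == 0%N then a else if val k == 1%N then b else c.

Definition det3 (R : comNzRingType) (u v w : 'I_3 -> R) : R :=
  \det (\matrix_(a < 3, b < 3)
          (if val b == 0%N then u a else if val b == 1%N then v a else w a)).

Definition cross (R : comNzRingType) (u w : 'I_3 -> R) : 'I_3 -> R :=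
  vec3 (u (inord 1) * w (inord 2) - u (inord 2) * w (inord 1))
       (u (inord 2) * w (inord 0) - u (inord 0) * w (inord 2))
       (u (inord 0) * w (inord 1) - u (inord 1) * w (inord 0)).

Section Wachspress.
Variables (R : realFieldType) (d : nat) (v : 'I_d -> R * R).

Definition bv (i : 'I_d) : 'I_3 -> R := vec3 (v i).1 (v i).2 1.
Definition bp (p : R * R) : 'I_3 -> R := vec3 p.1 p.2 1.
Definition nrm (i : 'I_d) : 'I_3 -> R := cross (bv i) (bv (nxt i)).
Definition alpha (j : 'I_d) : R := det3 (bv (prv j)) (bv j) (bv (nxt j)).
Definition ell (j : 'I_d) (p : R * R) : R := det3 (bv j) (bv (nxt j)) (bp p).
Definition bcoord (p : R * R) (i : 'I_d) : R :=
  alpha i * \prod_(j : 'I_d | (j != prv i) && (j != i)) ell j p.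

(* f is in I_{W_d}: f vanishes on the image of p |-> (b_1(p),...,b_d(p)),
   equivalently on its Zariski closure W_d. *)
Definition in_IW (f : {mpoly R[d]}) : Prop :=
  forall p : R * R, f.@[bcoord p] = 0.

Definition Lambda (r : 'I_d) : 'I_3 -> {mpoly R[d]} :=
  fun a => 'X_(nxt r) * ((nrm (nxt r) a / alpha (nxt r))%:MP)
         - 'X_r * ((nrm (prv r) a / alpha r)%:MP).

Definition wijk (i j k : 'I_d) : {mpoly R[d]} := det3 (Lambda i) (Lambda j) (Lambda k).

(* Strictly convex polygon with vertices v_1,...,v_d listed in cyclic order
   (either orientation): every other vertex lies strictly on the same side
   of each edge line. *)
Definition convex_polygon : Prop :=
  exists s : R, (s = 1 \/ s = -1) /\
    forall (i k : 'I_d), k != i -> k != nxt i ->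
      0 < s * det3 (bv i) (bv (nxt i)) (bv k).

(* No three edge lines concurrent (in the projective plane). *)
Definition no_three_concurrent : Prop :=
  forall (i j k : 'I_d), i != j -> j != k -> k != i ->
    det3 (nrm i) (nrm j) (nrm k) != 0.

End Wachspress.

(* For every [r], the column [Lambda_r] evaluated at [b(p)] is orthogonal to
   [(p, 1)]: its two terms are [b_{r+1}/alpha_{r+1} l_{r+1}(p)] and
   [b_r/alpha_r l_{r-1}(p)], both equal to [prod_{j <> r} l_j(p)].  Three
   vectors orthogonal to a common nonzero vector are linearly dependent, so
   [w_{i,j,k}] vanishes at [b(p)].  Only [alpha_r <> 0] (from convexity) and
   [d >= 3] are needed. *)

From HB Require Import structures.
From mathcomp Require Import all_boot all_order all_algebra.
From mathcomp Require Import mpoly.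
From mathcomp Require Import zify ring.
Set Implicit Arguments. Unset Strict Implicit. Unset Printing Implicit Defensive.
Import Order.TTheory GRing.Theory Num.Theory.
Local Open Scope ring_scope.

Lemma val_ordS n (r : 'I_n) : val (ordS r) = if r.+1 == n then 0%N else r.+1.
Proof.
rewrite /=; have := ltn_ord r; case: eqP => [->|ne_n] lt_r; first by rewrite modnn.
by rewrite modn_small //; lia.
Qed.

Lemma ordS_neq n (r : 'I_n) : (1 < n)%N -> ordS r != r.
Proof.
move=> n_gt1; apply/eqP => /(congr1 (@nat_of_ord n)); rewrite val_ordS.
by have := ltn_ord r; case: eqP; lia.
Qed.

Lemma ord_pred_neq n (r : 'I_n) : (1 < n)%N -> ord_pred r != r.
Proof.
move=> n_gt1; apply: contra_neq _ (ordS_neq r n_gt1) => pred_r.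
by rewrite -{1}pred_r ord_predK.
Qed.

Lemma ordS_neq_ord_pred n (r : 'I_n) : (2 < n)%N -> ordS r != ord_pred r.
Proof.
move=> n_gt2; apply: contra_neq _ (_ : ordS (ordS r) != r) => [succ_r|].
  by rewrite {1}succ_r ord_predK.
apply/eqP => /(congr1 (@nat_of_ord n)); rewrite !val_ordS.
by have := ltn_ord r; do 2!case: eqP => /=; lia.
Qed.

Lemma vec3_0 (T : Type) (a b c : T) : vec3 a b c (inord 0) = a.
Proof. by rewrite /vec3 /= inordK. Qed.

Lemma vec3_1 (T : Type) (a b c : T) : vec3 a b c (inord 1) = b.
Proof. by rewrite /vec3 /= inordK. Qed.

Lemma vec3_2 (T : Type) (a b c : T) : vec3 a b c (inord 2) = c.
Proof. by rewrite /vec3 /= inordK. Qed.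

Section ThreeVectors.
Variable R : comNzRingType.
Implicit Types u v w p : 'I_3 -> R.

Definition dot u w : R :=
  u (inord 0) * w (inord 0) + u (inord 1) * w (inord 1) + u (inord 2) * w (inord 2).

Lemma det3E u v w :
  det3 u v w = u (inord 0) * (v (inord 1) * w (inord 2) - v (inord 2) * w (inord 1))
             - v (inord 0) * (u (inord 1) * w (inord 2) - u (inord 2) * w (inord 1))
             + w (inord 0) * (u (inord 1) * v (inord 2) - u (inord 2) * v (inord 1)).
Proof.
set U := fun n => u (inord n); set V := fun n => v (inord n); set W := fun n => w (inord n).
have -> : det3 u v w = \det (\matrix_(a < 3, b < 3)
    (if val b == 0%N then U (val a) else if val b == 1%N then V (val a) else W (val a))).
  by congr (\det _); apply/matrixP => a b; rewrite !mxE /U /V /W !inord_val.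
rewrite (expand_det_col _ ord0) !big_ord_recr big_ord0 /= /cofactor.
rewrite !(expand_det_col _ ord0) !big_ord_recr !big_ord0 /= /cofactor !det_mx11 !mxE /=.
rewrite /U /V /W /=; ring.
Qed.

Lemma dot_cross u v w : dot (cross u v) w = det3 u v w.
Proof. by rewrite det3E /dot /cross vec3_0 vec3_1 vec3_2; ring. Qed.

(* Cofactor identity: [det3 u v w * p_2] is a combination of [dot u p], [dot v p], [dot w p]. *)
Lemma det3_eq0_orthogonal u v w p :
  p (inord 2) = 1 -> dot u p = 0 -> dot v p = 0 -> dot w p = 0 -> det3 u v w = 0.
Proof.
move=> p2 up vp wp.
have cramer : det3 u v w * p (inord 2) =
    dot u p * (v (inord 0) * w (inord 1) - v (inord 1) * w (inord 0))
  + dot v p * (w (inord 0) * u (inord 1) - w (inord 1) * u (inord 0))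
  + dot w p * (u (inord 0) * v (inord 1) - u (inord 1) * v (inord 0)).
  by rewrite det3E /dot; ring.
by move: cramer; rewrite p2 mulr1 up vp wp !mul0r !addr0.
Qed.

End ThreeVectors.

Lemma meval_det3 (R : comNzRingType) n (x : 'I_n -> R) (u v w : 'I_3 -> {mpoly R[n]}) :
  (det3 u v w).@[x] =
  det3 (fun t => (u t).@[x]) (fun t => (v t).@[x]) (fun t => (w t).@[x]).
Proof. by rewrite !det3E !(mevalB, mevalD, mevalM). Qed.

Section Wachspress.
Variables (R : realFieldType) (d : nat) (v : 'I_d -> R * R).
Hypothesis d_gt2 : (2 < d)%N.

Lemma alpha_neq0 : convex_polygon v -> forall r : 'I_d, alpha v r != 0.
Proof.
case=> s [_ convex] r.
have := convex (prv r) (nxt r); rewrite /nxt /prv ord_predK.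
have d_gt1 : (1 < d)%N by apply: ltnW.
move=> /(_ (ordS_neq_ord_pred r d_gt2) (ordS_neq r d_gt1)).
by apply: contraTneq; rewrite /alpha => ->; rewrite mulr0 ltxx.
Qed.

Hypothesis alpha_nz : forall r : 'I_d, alpha v r != 0.

Lemma bcoord_nxt_ell (p : R * R) (r : 'I_d) :
  bcoord v p (nxt r) / alpha v (nxt r) * ell v (nxt r) p =
  \prod_(j : 'I_d | j != r) ell v j p.
Proof.
rewrite /bcoord [alpha _ _ * _]mulrC mulfK // mulrC.
rewrite [RHS](bigD1 (nxt r)) ?ordS_neq 1?ltnW //=.
by rewrite /nxt /prv ordSK.
Qed.

Lemma bcoord_prv_ell (p : R * R) (r : 'I_d) :
  bcoord v p r / alpha v r * ell v (prv r) p = \prod_(j : 'I_d | j != r) ell v j p.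
Proof.
rewrite /bcoord [alpha _ _ * _]mulrC mulfK // mulrC.
rewrite [RHS](bigD1 (prv r)) ?ord_pred_neq 1?ltnW //=.
by congr (_ * _); apply: eq_bigl => j; rewrite andbC.
Qed.

Lemma Lambda_orthogonal (p : R * R) (r : 'I_d) :
  dot (fun t => (Lambda v r t).@[bcoord v p]) (bp p) = 0.
Proof.
have -> : dot (fun t => (Lambda v r t).@[bcoord v p]) (bp p) =
    bcoord v p (nxt r) / alpha v (nxt r) * dot (nrm v (nxt r)) (bp p)
  - bcoord v p r / alpha v r * dot (nrm v (prv r)) (bp p).
  by rewrite /dot /Lambda !(mevalB, mevalM, mevalXU, mevalC); ring.
rewrite !dot_cross -/(ell v (nxt r) p) -/(ell v (prv r) p).
by rewrite bcoord_nxt_ell bcoord_prv_ell subrr.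
Qed.

Lemma wijk_in_IW (i j k : 'I_d) : in_IW v (wijk v i j k).
Proof.
move=> p; rewrite /wijk meval_det3.
by apply: det3_eq0_orthogonal (Lambda_orthogonal p i) (Lambda_orthogonal p j)
  (Lambda_orthogonal p k); rewrite /bp vec3_2.
Qed.

End Wachspress.

Theorem theorem4p1 (R : realFieldType) (d : nat) (v : 'I_d -> R * R)
  (hd : (4 <= d)%N)
  (hconv : convex_polygon v)
  (hconc : no_three_concurrent v)
  (i j k : 'I_d) (hij : i != j) (hjk : j != k) (hki : k != i) :
  in_IW v (wijk v i j k).
Proof.
have d_gt2 : (2 < d)%N by apply: ltnW.
exact: wijk_in_IW d_gt2 (alpha_neq0 d_gt2 hconv) i j k.
Qed.
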